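(* For every $n\ge1$ and every unlabeled binary tree $T\in\mathrm{URL}_n$, there exists a bijection $\Omega$ from $\mathrm{RS}(T)$ to $\mathrm{And}^{II}(T)$.
   Context: A binary tree is a rooted tree in which every vertex has no child, a single left child, a single right child, or both. The map $\Psi$ sends a word $\pi$ of distinct integers to an increasing binary tree: $\Psi(\emptyset)=\emptyset$; otherwise write $\pi=\sigma\, i\,\tau$ with $i$ the least letter, and let $\Psi(\pi)$ have root $i$, left subtree $\Psi(\sigma)$, right subtree $\Psi(\tau)$. The shape of a labeled tree is its underlying unlabeled binary tree. $\mathrm{URL}_n$ is the set of unlabeled rooted binary trees with $n$ vertices in which no vertex has a left child but no right child. Andr\'e II permutations: the empty word and one-letter words are Andr\'e II; a word $\sigma$ of $n\ge2$ distinct integers, written $\sigma=\tau\,\min(\sigma)\,\tau'$, is Andr\'e II if $\tau,\tau'$ are Andr\'e II and the smallest letter of $\tau\tau'$ lies in $\tau'$. A permutation $\sigma$ of $[n]$ is simsun if $\sigma_n=n$ and for each $k\in[n]$ the subword formed by the letters $1,\dots,k$ has no index $i$ with $w_i>w_{i+1}>w_{i+2}$. $\mathrm{RS}(T)$ (resp. $\mathrm{And}^{II}(T)$) is the set of simsun (resp. Andr\'e II) permutations $\sigma$ of $[n]$ with $\mathrm{shape}(\Psi(\sigma))=T$. *)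

From mathcomp Require Import all_boot.
Set Implicit Arguments. Unset Strict Implicit. Unset Printing Implicit Defensive.

(* Unlabeled binary trees; [Leaf] is the empty tree, [Node l r] a vertex
   with left subtree l and right subtree r (empty subtree = no child). *)
Inductive btree := Leaf | Node of btree & btree.

Fixpoint bsize (t : btree) : nat :=
  match t with Leaf => 0 | Node l r => (bsize l + bsize r).+1 end.

Fixpoint no_left_only (t : btree) : bool :=
  match t with
  | Leaf => true
  | Node (Node _ _) Leaf => false
  | Node l r => no_left_only l && no_left_only r
  end.

Definition URL (n : nat) (t : btree) : Prop := bsize t = n /\ no_left_only t.

Inductive ltree := LLeaf | LNode of ltree & nat & ltree.

Fixpoint tshape (t : ltree) : btree :=
  match t with LLeaf => Leaf | LNode l _ r => Node (tshape l) (tshape r) end.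

Definition minw (s : seq nat) : nat := foldr minn (head 0 s) s.
Definition lpart (s : seq nat) : seq nat := take (index (minw s) s) s.
Definition rpart (s : seq nat) : seq nat := drop (index (minw s) s).+1 s.

(* Psi, with fuel (fuel = size of the word suffices) *)
Fixpoint Psi_aux (fuel : nat) (s : seq nat) : ltree :=
  match fuel with
  | 0 => LLeaf
  | f.+1 => if s is [::] then LLeaf
            else LNode (Psi_aux f (lpart s)) (minw s) (Psi_aux f (rpart s))
  end.
Definition Psi (s : seq nat) : ltree := Psi_aux (size s) s.

Fixpoint andre2_aux (fuel : nat) (s : seq nat) : bool :=
  match fuel with
  | 0 => size s <= 1
  | f.+1 => if size s <= 1 then true
            else [&& andre2_aux f (lpart s), andre2_aux f (rpart s)
                  & minw (lpart s ++ rpart s) \in rpart s]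
  end.
Definition andre2 (s : seq nat) : bool := andre2_aux (size s) s.

Definition is_perm (n : nat) (s : seq nat) : bool := perm_eq s (iota 1 n).

Definition no_double_descent (w : seq nat) : bool :=
  all (fun i => ~~ ((nth 0 w i > nth 0 w i.+1) && (nth 0 w i.+1 > nth 0 w i.+2)))
      (iota 0 (size w - 2)).

Definition simsun (n : nat) (s : seq nat) : bool :=
  [&& is_perm n s, last 0 s == n &
      all (fun k => no_double_descent [seq x <- s | x <= k]) (iota 1 n)].

Definition RS (T : btree) (s : seq nat) : Prop :=
  simsun (bsize T) s /\ tshape (Psi s) = T.

Definition AndII (T : btree) (s : seq nat) : Prop :=
  [/\ is_perm (bsize T) s, andre2 s & tshape (Psi s) = T].

From mathcomp Require Import all_boot zify.
From Stdlib Require Import ProofIrrelevance.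
Set Implicit Arguments. Unset Strict Implicit. Unset Printing Implicit Defensive.

(* Cut a word w with distinct letters at its least letter, w = s a t; then
   Psi w has root a and subtrees Psi s and Psi t.  Both conditions unfold
   along this cut.  The word s a t is Andre II iff s and t are and the least
   letter of s t lies in t.  The restrictions of s a t to its letters <= k have
   no double descents iff the same holds for s a and for t.  The two notions
   are linked by one fact: a word u whose letters all exceed c is Andre II iff
   every restriction of u c is free of double descents.
   The bijection keeps the tree shape.  It raises the labels of the left
   subtrees by one and shifts the labels of the right spine one step down,
   with 1 at the root and the bottom label n dropped.  For a simsun word
   s a t, the prefix s a is simsun, so the raised copy of s is Andre II.  The
   new label a + 1 below the root is smaller than every raised letter of s,
   and since the last letter n is the largest, t is empty only when s is.
   The inverse shifts the spine back up and puts n at the bottom. *)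

Lemma minw_le s x : x \in s -> minw s <= x.
Proof.
rewrite /minw; move: (head 0 s) => d.
elim: s => [|y s IH] //=; rewrite in_cons geq_min => /orP [/eqP ->|/IH ->].
  by rewrite leqnn.
by rewrite orbT.
Qed.

Lemma mem_minw s : s != [::] -> minw s \in s.
Proof.
case: s => [|y s] // _; rewrite /minw /=.
suff ys : foldr minn y s \in y :: s by rewrite /minn; case: ifP; rewrite ?mem_head.
elim: s => [|z s IH] /=; first exact: mem_head.
rewrite /minn; case: ifP => _; first by rewrite !inE eqxx orbT.
by move: IH; rewrite !inE => /orP [->|->]; rewrite ?orbT.
Qed.

Lemma minw_eq s m : m \in s -> {in s, forall x, m <= x} -> minw s = m.
Proof.
move=> ms m_le; apply/eqP; rewrite eqn_leq minw_le // m_le // mem_minw //.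
by apply: contraTneq ms => ->.
Qed.

Lemma all_ltn_trans x a s : x <= a -> all (ltn a) s -> all (ltn x) s.
Proof. by move=> xa; apply: sub_all => z; apply: leq_ltn_trans. Qed.

Lemma cat_lpart_rpart s : s != [::] -> lpart s ++ minw s :: rpart s = s.
Proof.
move=> ns; rewrite /lpart /rpart -[in RHS](cat_take_drop (index (minw s) s) s).
by rewrite [in RHS](drop_nth 0) ?index_mem ?mem_minw // nth_index ?mem_minw.
Qed.

Lemma size_parts s : s != [::] -> size (lpart s) + size (rpart s) < size s.
Proof. by move=> ns; rewrite -[in X in _ < X](cat_lpart_rpart ns) size_cat /= addnS. Qed.

Lemma ltn_minw_parts s : uniq s -> all (ltn (minw s)) (lpart s ++ rpart s).
Proof.
have [-> //|ns] := eqVneq s [::].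
rewrite -{1}(cat_lpart_rpart ns) -cat1s uniq_catCA cat1s /= => /andP [m_out _].
apply/allP => x xs; rewrite /= ltn_neqAle minw_le ?andbT.
  by apply: contraNneq m_out => ->.
by rewrite -(cat_lpart_rpart ns) mem_cat in_cons orbCA -mem_cat xs orbT.
Qed.

Lemma uniq_parts (s t : seq nat) a : uniq (s ++ a :: t) -> uniq s /\ uniq t.
Proof. by rewrite cat_uniq /= => /and4P [us _ _ ut]. Qed.

Section MinSplit.

Variables (s t : seq nat) (a : nat).
Hypothesis gt_a : all (ltn a) (s ++ t).

Lemma minw_cat : minw (s ++ a :: t) = a.
Proof.
apply: minw_eq => [|x]; first by rewrite mem_cat mem_head orbT.
rewrite mem_cat inE orbCA => /orP [/eqP -> //|xst].
by apply: ltnW; apply: (allP gt_a); rewrite mem_cat.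
Qed.

Lemma index_min_cat : index a (s ++ a :: t) = size s.
Proof.
rewrite index_cat /= eqxx addn0; case: ifP => // a_s.
by have /= := allP gt_a a; rewrite mem_cat a_s ltnn => /(_ isT).
Qed.

Lemma lpart_cat : lpart (s ++ a :: t) = s.
Proof. by rewrite /lpart minw_cat index_min_cat take_size_cat. Qed.

Lemma rpart_cat : rpart (s ++ a :: t) = t.
Proof. by rewrite /rpart minw_cat index_min_cat -cat_rcons drop_size_cat ?size_rcons. Qed.

End MinSplit.

Lemma uniq_min_ind (P : seq nat -> Prop) :
  P [::] ->
  (forall s a t, uniq (s ++ a :: t) -> all (ltn a) (s ++ t) ->
     P s -> P t -> P (s ++ a :: t)) ->
  forall w : seq nat, uniq w -> P w.
Proof.
move=> P0 Pcat w; have [n] := ubnP (size w); elim: n w => // n IH w.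
have [-> //|nw] := eqVneq w [::]; rewrite ltnS => w_le uw.
have lt_parts := size_parts nw; have gt_min := ltn_minw_parts uw.
rewrite -(cat_lpart_rpart nw) in uw *.
have [ul ur] := uniq_parts uw.
apply: Pcat => //; [apply: IH ul | apply: IH ur]; apply: leq_trans w_le.
  exact: leq_ltn_trans (leq_addr _ _) lt_parts.
exact: leq_ltn_trans (leq_addl _ _) lt_parts.
Qed.

Lemma Psi_aux_fuel f g w : size w <= f -> size w <= g -> Psi_aux f w = Psi_aux g w.
Proof.
elim: f g w => [|f IH] [|g] [|x w] //= le_f le_g.
have := size_parts (isT : x :: w != [::]) => /= lt_parts.
by congr LNode; apply: IH; lia.
Qed.

Lemma Psi_aux_nonnil f w : w != [::] ->
  Psi_aux f.+1 w = LNode (Psi_aux f (lpart w)) (minw w) (Psi_aux f (rpart w)).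
Proof. by case: w. Qed.

Lemma Psi_cat s a t : all (ltn a) (s ++ t) -> Psi (s ++ a :: t) = LNode (Psi s) a (Psi t).
Proof.
move=> gt_a; rewrite /Psi size_cat /= addnS Psi_aux_nonnil; last by case: (s).
rewrite minw_cat ?lpart_cat ?rpart_cat //.
by congr LNode; apply: Psi_aux_fuel; rewrite ?leq_addr ?leq_addl.
Qed.

Fixpoint inorder (t : ltree) : seq nat :=
  if t is LNode l a r then inorder l ++ a :: inorder r else [::].

Lemma inorder_Psi w : inorder (Psi w) = w.
Proof.
suff inorder_Psi_aux f : size w <= f -> inorder (Psi_aux f w) = w by exact: inorder_Psi_aux.
elim: f w => [|f IH] [|x w] //= le_f.
have := size_parts (isT : x :: w != [::]) => /= lt_parts.
by rewrite !IH ?cat_lpart_rpart //; lia.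
Qed.

Lemma andre2_aux_fuel f g w : size w <= f -> size w <= g -> andre2_aux f w = andre2_aux g w.
Proof.
elim: f g w => [|f IH] [|g] [|x w] //= le_f le_g; case: ifP => // _.
have := size_parts (isT : x :: w != [::]) => /= lt_parts.
by rewrite (IH g) 1?(IH g (rpart _)) //; lia.
Qed.

Definition min_right (s t : seq nat) : bool := (s ++ t == [::]) || (minw (s ++ t) \in t).

Lemma andre2_cat s a t : all (ltn a) (s ++ t) ->
  andre2 (s ++ a :: t) = [&& andre2 s, andre2 t & min_right s t].
Proof.
move=> gt_a; rewrite /andre2 size_cat /= addnS /= lpart_cat ?rpart_cat //.
have -> : (size (s ++ a :: t) <= 1) = (s ++ t == [::]).
  by rewrite -size_eq0 !size_cat /= addnS ltnS leqn0.
rewrite (@andre2_aux_fuel (size s + size t) (size s) s) ?leq_addr //.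
rewrite (@andre2_aux_fuel (size s + size t) (size t) t) ?leq_addl //.
rewrite /min_right; case: eqP => [|_] //.
by move/eqP; rewrite -nilpE cat_nilp !nilpE => /andP [/eqP -> /eqP ->].
Qed.

Lemma min_rightP s t : reflect (forall k, all (ltn k) t -> all (ltn k) s) (min_right s t).
Proof.
apply: (iffP orP) => [[st0 | mt] k lb_t | lb].
- by case: (s) st0.
- apply/allP => x xs; apply: leq_trans (allP lb_t _ mt) _.
  by rewrite minw_le // mem_cat xs.
have [-> | nst] := eqVneq (s ++ t) [::]; [by left | right].
apply: contraT => m_t.
have lb_t : all (ltn (minw (s ++ t))) t.
  apply/allP => y yt; rewrite /= ltn_neqAle minw_le ?mem_cat ?yt ?orbT // andbT.
  by apply: contraNneq m_t => ->.
have := mem_minw nst; rewrite mem_cat (negbTE m_t) orbF => /(allP (lb _ lb_t)).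
by rewrite /= ltnn.
Qed.

Lemma min_right_uniq s t : uniq (s ++ t) -> min_right s t ->
  (t = [::] -> s = [::]) /\ all (ltn (minw t)) s.
Proof.
rewrite cat_uniq => /and3P [_ disj_st _] /orP [st0 | mt].
  by case: (s) (t) st0 => [|? ?] [|? ?].
have nt : t != [::] by apply: contraTneq mt => ->.
have m_eq : minw (s ++ t) = minw t.
  by apply/eqP; rewrite eqn_leq minw_le ?mem_cat ?mem_minw ?orbT // minw_le.
split=> [t0|]; first by rewrite t0 in nt.
apply/allP => x xs; rewrite /= ltn_neqAle -m_eq minw_le ?mem_cat ?xs // andbT.
by apply: contraNneq disj_st => m_x; rewrite m_x in mt; apply/hasP; exists x.
Qed.

Lemma andre2_cat_parts s a t : uniq (s ++ a :: t) -> all (ltn a) (s ++ t) ->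
  andre2 (s ++ a :: t) -> [/\ andre2 s, andre2 t, t = [::] -> s = [::] & all (ltn (minw t)) s].
Proof.
rewrite -cat1s uniq_catCA cat1s /= => /andP [_ ust] gt_a.
by rewrite andre2_cat // => /and3P [As At /(min_right_uniq ust) [st lt_s]].
Qed.

Section Relabel.

Variable f : nat -> nat.
Hypothesis f_incr : {homo f : m n / m < n}.

Let f_mono : {mono f : m n / m <= n} := leq_mono f_incr.

Lemma minw_map w : w != [::] -> minw (map f w) = f (minw w).
Proof.
move=> nw; apply: minw_eq; first by rewrite map_f ?mem_minw.
by move=> _ /mapP [x xw ->]; rewrite f_mono minw_le.
Qed.

Lemma min_right_map s t : min_right (map f s) (map f t) = min_right s t.
Proof.
rewrite /min_right -map_cat -size_eq0 size_map size_eq0.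
have [// | nst] := eqVneq (s ++ t) [::].
by rewrite minw_map // mem_map //; apply: incn_inj f_mono.
Qed.

Lemma all_ltn_map a w : all (ltn a) w -> all (ltn (f a)) (map f w).
Proof. by rewrite all_map; apply: sub_all => x /f_incr. Qed.

Lemma shape_map w : uniq w -> tshape (Psi (map f w)) = tshape (Psi w).
Proof.
move: w; apply: uniq_min_ind => // s a t _ gt_a IHs IHt.
have gt_fa : all (ltn (f a)) (map f s ++ map f t) by rewrite -map_cat all_ltn_map.
by rewrite map_cat /= !Psi_cat //= IHs IHt.
Qed.

Lemma andre2_map w : uniq w -> andre2 (map f w) = andre2 w.
Proof.
move: w; apply: uniq_min_ind => // s a t _ gt_a IHs IHt.
have gt_fa : all (ltn (f a)) (map f s ++ map f t) by rewrite -map_cat all_ltn_map.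
by rewrite map_cat /= !andre2_cat // IHs IHt min_right_map.
Qed.

End Relabel.

Lemma succn_incr : {homo succn : m n / m < n}.
Proof. by []. Qed.

Lemma succn_map_predn s : all (ltn 0) s -> map succn (map predn s) = s.
Proof. by move=> /allP s_pos; rewrite -map_comp map_id_in // => x /s_pos /prednK. Qed.

Lemma uniq_map_predn s : all (ltn 0) s -> uniq (map predn s) = uniq s.
Proof. by move=> s_pos; rewrite -(map_inj_uniq succn_inj) succn_map_predn. Qed.

Lemma andre2_map_predn s : all (ltn 0) s -> uniq s -> andre2 (map predn s) = andre2 s.
Proof.
move=> s_pos us; rewrite -[in RHS](succn_map_predn s_pos) (andre2_map succn_incr) //.
by rewrite uniq_map_predn.
Qed.

Lemma shape_map_predn s : all (ltn 0) s -> uniq s -> tshape (Psi (map predn s)) = tshape (Psi s).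
Proof.
move=> s_pos us; rewrite -[in RHS](succn_map_predn s_pos) (shape_map succn_incr) //.
by rewrite uniq_map_predn.
Qed.

Fixpoint ddfree (w : seq nat) : bool :=
  if w is x :: t then
    (if t is y :: z :: _ then ~~ ((x > y) && (y > z)) else true) && ddfree t
  else true.

Lemma no_double_descentE w : no_double_descent w = ddfree w.
Proof.
elim: w => [|x w IH] //; case: w IH => [|y [|z r]] IH //.
have -> : ddfree [:: x, y, z & r] = ~~ ((x > y) && (y > z)) && ddfree [:: y, z & r] by [].
rewrite -IH /no_double_descent /= !subSS subn0; congr andb.
by rewrite -[1]/(1 + 0) iotaDl all_map.
Qed.

Lemma ddfree_cat_asc u b c v : b < c ->
  ddfree (u ++ b :: c :: v) = ddfree (rcons u b) && ddfree (c :: v).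
Proof.
move=> bc; elim: u => [|x u IH].
  by rewrite /= [c < b]ltnNge (ltnW bc); case: v => [|? [|? ?]].
rewrite [ddfree (x :: _)]/= [ddfree (rcons _ _)]/= IH andbA; congr (_ && _ && _).
by case: u {IH} => [|y [|z u]] //=; rewrite [c < b]ltnNge (ltnW bc) ?andbF.
Qed.

Lemma ddfree_cat_min u a v : all (ltn a) v ->
  ddfree (u ++ a :: v) = ddfree (rcons u a) && ddfree v.
Proof.
case: v => [|c v] /=; first by rewrite cats1 andbT.
by move=> /andP [ac _]; rewrite ddfree_cat_asc.
Qed.

Lemma ddfree_catr u v : ddfree (u ++ v) -> ddfree v.
Proof. by elim: u => //= x u IH /andP [_ /IH]. Qed.

Lemma ddfree_cat_desc u a c : c < a -> all (ltn a) u -> ddfree (u ++ [:: a; c]) = (u == [::]).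
Proof.
case/lastP: u => [|u x] //= ca; rewrite all_rcons => /andP [ax _].
rewrite -size_eq0 size_rcons cat_rcons /=; apply/negP => /ddfree_catr /=.
by rewrite -[a < x]/(ltn a x) ax ca.
Qed.

Definition restrict (k : nat) (w : seq nat) : seq nat := [seq x <- w | x <= k].

Definition simsun_word (w : seq nat) : Prop := forall k, ddfree (restrict k w).

Lemma restrict_eq_nil k w : (restrict k w == [::]) = all (ltn k) w.
Proof. by elim: w => //= x w IH; rewrite leqNgt; case: (k < x). Qed.

Lemma restrict_gt k a w : k < a -> all (ltn a) w -> restrict k w = [::].
Proof. by move=> ka gt_w; apply/eqP; rewrite restrict_eq_nil (all_ltn_trans (ltnW ka)). Qed.

Lemma ddfree_restrict_cat k s a t : all (ltn a) (s ++ t) ->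
  ddfree (restrict k (s ++ a :: t)) = ddfree (restrict k (rcons s a)) && ddfree (restrict k t).
Proof.
rewrite all_cat => /andP [gt_s gt_t]; rewrite /restrict filter_cat filter_rcons /=.
case: (leqP a k) => [ak | ka].
  rewrite ddfree_cat_min //; apply/allP => x.
  by rewrite mem_filter => /andP [_ /(allP gt_t)].
by rewrite -/(restrict k s) -/(restrict k t) !(restrict_gt ka).
Qed.

Lemma simsun_word_cat s a t : all (ltn a) (s ++ t) ->
  simsun_word (s ++ a :: t) <-> simsun_word (rcons s a) /\ simsun_word t.
Proof.
move=> gt_a; split => [sw | [sw_s sw_t] k]; last by rewrite ddfree_restrict_cat // sw_s sw_t.
by split=> k; have := sw k; rewrite ddfree_restrict_cat // => /andP [].
Qed.

(* The last conjunct: if s had a letter at most k but t had none, the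
   restriction would end with a descending triple x > a > c. *)
Lemma ddfree_restrict_rcons_cat k s a t c : c < a -> all (ltn a) (s ++ t) ->
  ddfree (restrict k (rcons (s ++ a :: t) c)) =
  [&& ddfree (restrict k (rcons s a)), ddfree (restrict k (rcons t c))
    & all (ltn k) t ==> all (ltn k) s].
Proof.
move=> ca; rewrite all_cat => /andP [gt_s gt_t].
rewrite -!restrict_eq_nil /restrict rcons_cat rcons_cons filter_cat /= !filter_rcons.
case: (leqP a k) => [ak | ka]; last first.
  by rewrite -/(restrict k s) -/(restrict k t) !(restrict_gt ka) //; case: (c <= k).
have gt_rs : all (ltn a) [seq x <- s | x <= k].
  by apply/allP => x; rewrite mem_filter => /andP [_ /(allP gt_s)].
rewrite (leq_trans (ltnW ca) ak).
case rt: [seq x <- t | x <= k] => [|d v].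
  rewrite /= ddfree_cat_desc //.
  by case: [seq x <- s | x <= k] gt_rs => [|? ?] _; rewrite ?andbF.
have : d \in [seq x <- t | x <= k] by rewrite rt mem_head.
rewrite mem_filter => /andP [_ dt].
rewrite ddfree_cat_asc; last exact: (allP gt_t).
by rewrite [_ ==> _]/= andbT.
Qed.

Lemma simsun_word_rcons_cat s a t c : c < a -> all (ltn a) (s ++ t) ->
  simsun_word (rcons (s ++ a :: t) c) <->
  [/\ simsun_word (rcons s a), simsun_word (rcons t c)
    & forall k, all (ltn k) t -> all (ltn k) s].
Proof.
move=> ca gt_a; have E k := ddfree_restrict_rcons_cat k ca gt_a.
split => [sw | [sw_s sw_t lb] k]; last by rewrite E sw_s sw_t; apply/implyP/lb.
by split=> k; move: (sw k); rewrite E => /and3P [? ? /implyP].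
Qed.

Lemma andre2_simsun_word w c : uniq w -> all (ltn c) w -> andre2 w <-> simsun_word (rcons w c).
Proof.
move=> uw; move: w uw c; apply: uniq_min_ind => [c _ | s a t _ gt_a IHs IHt c gt_c].
  by split=> // _ k; rewrite /restrict /=; case: ifP.
have ca : c < a by apply: (allP gt_c); rewrite mem_cat mem_head orbT.
have /andP [gt_s gt_t] : all (ltn a) s && all (ltn a) t by rewrite -all_cat.
have {}IHs := IHs a gt_s; have {}IHt := IHt c (all_ltn_trans (ltnW ca) gt_t).
rewrite andre2_cat // simsun_word_rcons_cat //.
split=> [/and3P [/IHs ? /IHt ? /min_rightP ?] | [/IHs ? /IHt ? /min_rightP ?]] //.
exact/and3P.
Qed.

(* Read in inorder, [push_spine x] raises the labels of the left subtrees by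
   one and replaces the labels a_1 < a_2 < ... < a_k of the right spine by
   x, a_1 + 1, ..., a_(k-1) + 1; [pop_spine y] undoes this, with y as the new
   bottom label.  [omega 1] is the paper's bijection. *)
Fixpoint push_spine (x : nat) (t : ltree) : seq nat :=
  if t is LNode l a r then map succn (inorder l) ++ x :: push_spine a.+1 r else [::].

Fixpoint pop_spine (y : nat) (t : ltree) : seq nat :=
  if t is LNode l _ r then
    map predn (inorder l) ++ (if r is LNode _ b _ then b.-1 else y) :: pop_spine y r
  else [::].

Definition omega (x : nat) (w : seq nat) : seq nat := push_spine x (Psi w).
Definition omega_inv (y : nat) (w : seq nat) : seq nat := pop_spine y (Psi w).

Definition pop_label (y : nat) (w : seq nat) : nat := if w is [::] then y else (minw w).-1.

Lemma pop_label_nonnil y w : w != [::] -> pop_label y w = (minw w).-1.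
Proof. by case: w. Qed.

Lemma omega_cat x s a t : all (ltn a) (s ++ t) ->
  omega x (s ++ a :: t) = map succn s ++ x :: omega a.+1 t.
Proof. by move=> gt_a; rewrite /omega Psi_cat //= inorder_Psi. Qed.

Lemma omega_inv_cat y s a t : all (ltn a) (s ++ t) ->
  omega_inv y (s ++ a :: t) = map predn s ++ pop_label y t :: omega_inv y t.
Proof. by move=> gt_a; rewrite /omega_inv Psi_cat //= inorder_Psi; case: t {gt_a}. Qed.

Lemma mem_omega x w : w != [::] -> x \in omega x w.
Proof. by case: w => // z w _; rewrite /omega /= mem_cat mem_head orbT. Qed.

Lemma omega_gt x w : uniq w -> all (ltn x) w -> all (ltn x) (omega x.+1 w).
Proof.
move=> uw; move: w uw x; apply: uniq_min_ind => // s a t _ gt_a _ IHt x gt_x.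
have xa : x < a by apply: (allP gt_x); rewrite mem_cat mem_head orbT.
have /andP [gt_s gt_t] : all (ltn a) s && all (ltn a) t by rewrite -all_cat.
rewrite omega_cat // all_cat /= ltnSn (all_ltn_trans (ltnW xa) (IHt a gt_t)) !andbT all_map.
by apply: (sub_all _ gt_s) => z /= az; exact: ltnW (ltn_trans xa az).
Qed.

Lemma omega_cat_gt x s a t : uniq t -> x <= a -> all (ltn a) (s ++ t) ->
  all (ltn x) (map succn s ++ omega a.+1 t).
Proof.
move=> ut xa; rewrite [all _ (s ++ t)]all_cat => /andP [gt_s gt_t].
apply: all_ltn_trans xa _.
by rewrite all_cat omega_gt // andbT all_map; apply: (sub_all _ gt_s) => z /= /ltnW.
Qed.

Lemma minw_omega x w : uniq w -> all (ltn x) w -> w != [::] -> minw (omega x.+1 w) = x.+1.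
Proof. by move=> uw gt_x nw; apply: minw_eq (mem_omega _ nw) _; apply/allP/omega_gt. Qed.

Lemma perm_omega x w : uniq w ->
  perm_eq (rcons (omega x.+1 w) (last x w).+1) (x.+1 :: map succn w).
Proof.
move=> uw; move: w uw x; apply: uniq_min_ind => // s a t _ gt_a _ IHt x.
rewrite omega_cat // last_cat /= rcons_cat rcons_cons map_cat /=.
by rewrite -cat1s perm_catCA /= perm_cons perm_cat2l.
Qed.

Lemma shape_omega x w : uniq w -> all (ltn x) w -> tshape (Psi (omega x.+1 w)) = tshape (Psi w).
Proof.
move=> uw; move: w uw x; apply: uniq_min_ind => // s a t uw gt_a _ IHt x gt_x.
have xa : x < a by apply: (allP gt_x); rewrite mem_cat mem_head orbT.
have [us ut] := uniq_parts uw.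
have /andP [_ gt_t] : all (ltn a) s && all (ltn a) t by rewrite -all_cat.
by rewrite omega_cat // !Psi_cat ?omega_cat_gt //= (shape_map succn_incr) // IHt.
Qed.

Lemma andre2_omega x w : uniq w -> all (ltn x) w -> simsun_word w ->
  all (geq (last x w)) w -> andre2 (omega x.+1 w).
Proof.
move=> uw; move: w uw x; apply: uniq_min_ind => // s a t uw gt_a _ IHt x gt_x sw le_last.
have xa : x < a by apply: (allP gt_x); rewrite mem_cat mem_head orbT.
have [us ut] := uniq_parts uw.
have /andP [gt_s gt_t] : all (ltn a) s && all (ltn a) t by rewrite -all_cat.
have [sw_sa sw_t] := (simsun_word_cat gt_a).1 sw.
move: le_last; rewrite last_cat /= all_cat /= => /and3P [le_s _ le_t].
have [t0 | nt] := eqVneq t [::].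
  suff -> : s = [::] by rewrite t0.
  move: gt_s le_s; rewrite t0 /=; case: (s) => [|z s'] //= /andP [az _] /andP [za _].
  by have := leq_trans az za; rewrite ltnn.
rewrite omega_cat // andre2_cat ?omega_cat_gt //; apply/and3P; split.
- by rewrite (andre2_map succn_incr) //; apply/(andre2_simsun_word us gt_s).
- exact: IHt.
apply/min_rightP => k /allP lb; apply: all_ltn_trans (all_ltn_map succn_incr gt_s).
exact: ltnW (lb _ (mem_omega _ nt)).
Qed.

Lemma omega_invK x w : uniq w -> all (ltn x) w -> omega_inv (last x w) (omega x.+1 w) = w.
Proof.
move=> uw; move: w uw x; apply: uniq_min_ind => // s a t uw gt_a _ IHt x gt_x.
have xa : x < a by apply: (allP gt_x); rewrite mem_cat mem_head orbT.
have [_ ut] := uniq_parts uw.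
have /andP [_ gt_t] : all (ltn a) s && all (ltn a) t by rewrite -all_cat.
rewrite omega_cat // omega_inv_cat ?omega_cat_gt // (mapK succnK) last_cat /=.
have [-> // | nt] := eqVneq t [::]; rewrite IHt // pop_label_nonnil ?minw_omega //.
by apply: contraTneq (mem_omega a.+1 nt) => ->.
Qed.

Lemma omega_inv_ge y w : uniq w -> all (geq y) w -> all (leq (minw w)) (omega_inv y w).
Proof.
move=> uw; move: w uw; apply: uniq_min_ind => // s a t _ gt_a _ IHt.
have /andP [gt_s gt_t] : all (ltn a) s && all (ltn a) t by rewrite -all_cat.
rewrite all_cat /= => /and3P [_ ay le_t]; rewrite minw_cat // omega_inv_cat // all_cat /= all_map.
have -> : all (preim predn (leq a)) s by apply: (sub_all _ gt_s) => z /=; lia.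
have [-> | nt] := eqVneq t [::]; first by rewrite ay.
have lt_at : a < minw t := allP gt_t _ (mem_minw nt).
rewrite pop_label_nonnil // -ltnS prednK ?lt_at //=; last exact: leq_ltn_trans lt_at.
by apply: (sub_all _ (IHt le_t)) => z /=; apply: leq_trans (ltnW lt_at).
Qed.

Lemma omega_inv_cat_gt y s a t : uniq (s ++ a :: t) -> all (ltn a) (s ++ t) ->
  andre2 (s ++ a :: t) -> all (geq y) t ->
  all (ltn (pop_label y t)) (map predn s ++ omega_inv y t).
Proof.
move=> uw gt_a Aw le_t; have [_ _ t0s lt_s] := andre2_cat_parts uw gt_a Aw.
have [t0 | nt] := eqVneq t [::]; first by rewrite t0s t0.
have /andP [_ gt_t] : all (ltn a) s && all (ltn a) t by rewrite -all_cat.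
have lt_at : a < minw t := allP gt_t _ (mem_minw nt).
have [_ ut] := uniq_parts uw.
rewrite pop_label_nonnil // all_cat all_map; apply/andP; split.
  by apply: (sub_all _ lt_s) => z /=; lia.
by apply: (sub_all _ (omega_inv_ge ut le_t)) => z /=; lia.
Qed.

Lemma shape_omega_inv y w : uniq w -> andre2 w -> all (geq y) w ->
  tshape (Psi (omega_inv y w)) = tshape (Psi w).
Proof.
move=> uw; move: w uw; apply: uniq_min_ind => // s a t uw gt_a _ IHt Aw le_y.
have [us _] := uniq_parts uw; have [_ At _ _] := andre2_cat_parts uw gt_a Aw.
have /andP [gt_s _] : all (ltn a) s && all (ltn a) t by rewrite -all_cat.
move: (le_y); rewrite all_cat /= => /and3P [_ _ le_t].
have pos_s := all_ltn_trans (leq0n a) gt_s.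
have gt_pop := omega_inv_cat_gt uw gt_a Aw le_t.
by rewrite omega_inv_cat // !Psi_cat //= shape_map_predn // IHt.
Qed.

Lemma simsun_word_omega_inv y w : uniq w -> andre2 w -> all (geq y) w ->
  simsun_word (omega_inv y w).
Proof.
move=> uw; move: w uw; apply: uniq_min_ind => [_ _ k // | s a t uw gt_a _ IHt Aw le_y].
have [us _] := uniq_parts uw; have [As At _ _] := andre2_cat_parts uw gt_a Aw.
have /andP [gt_s _] : all (ltn a) s && all (ltn a) t by rewrite -all_cat.
have pos_s := all_ltn_trans (leq0n a) gt_s.
move: (le_y); rewrite all_cat /= => /and3P [_ _ le_t].
have gt_pop := omega_inv_cat_gt uw gt_a Aw le_t.
rewrite omega_inv_cat //; apply/(simsun_word_cat gt_pop); split; last exact: IHt.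
move: gt_pop; rewrite all_cat => /andP [gt_pop _].
by apply/(andre2_simsun_word _ gt_pop); rewrite ?uniq_map_predn ?andre2_map_predn.
Qed.

Lemma last_pop_spine y x0 l a r : last x0 (pop_spine y (LNode l a r)) = y.
Proof. by elim: r x0 l a => [|l' _ b r' IH] x0 l a; rewrite /= last_cat //=; apply: IH. Qed.

Lemma last_omega_inv y x0 w : w != [::] -> last x0 (omega_inv y w) = y.
Proof. by case: w => // z w _; apply: last_pop_spine. Qed.

Lemma perm_omega_inv y w : uniq w -> perm_eq (pop_label y w :: omega_inv y w) (y :: map predn w).
Proof.
move=> uw; move: w uw; apply: uniq_min_ind => // s a t _ gt_a _ IHt.
rewrite omega_inv_cat // pop_label_nonnil ?minw_cat //; last by case: (s).
rewrite map_cat /=; apply: (@perm_trans _ (a.-1 :: map predn s ++ y :: map predn t)).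
  by rewrite perm_cons perm_cat2l.
by apply/permP => p; rewrite /= !count_cat /=; lia.
Qed.

Lemma omegaK y w : uniq w -> andre2 w -> all (geq y) w -> omega (minw w) (omega_inv y w) = w.
Proof.
move=> uw; move: w uw; apply: uniq_min_ind => // s a t uw gt_a _ IHt Aw le_y.
have [_ At _ _] := andre2_cat_parts uw gt_a Aw.
have /andP [gt_s gt_t] : all (ltn a) s && all (ltn a) t by rewrite -all_cat.
move: (le_y); rewrite all_cat /= => /and3P [_ _ le_t].
have gt_pop := omega_inv_cat_gt uw gt_a Aw le_t.
rewrite minw_cat // omega_inv_cat // omega_cat // succn_map_predn ?(all_ltn_trans (leq0n a)) //.
have [-> // | nt] := eqVneq t [::].
have lt_at : a < minw t := allP gt_t _ (mem_minw nt).
by rewrite pop_label_nonnil // prednK ?IHt // (leq_ltn_trans (leq0n a) lt_at).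
Qed.

Lemma is_perm_props n s : is_perm n s -> [/\ uniq s, all (ltn 0) s & all (geq n) s].
Proof.
move=> ps; rewrite (perm_uniq ps) iota_uniq; split=> //; apply/allP => z.
  by rewrite (perm_mem ps) mem_iota => /andP [].
by rewrite (perm_mem ps) mem_iota add1n ltnS => /andP [].
Qed.

Lemma minw_is_perm n s : is_perm n s -> s != [::] -> minw s = 1.
Proof.
move=> ps ns; have [_ pos_s _] := is_perm_props ps; apply: minw_eq; last exact/allP.
rewrite (perm_mem ps) mem_iota leqnn add1n ltnS lt0n.
by rewrite -(size_iota 1 n) -(perm_size ps) size_eq0.
Qed.

Lemma simsun_wordP n s : is_perm n s ->
  all (fun k => no_double_descent [seq x <- s | x <= k]) (iota 1 n) <-> simsun_word s.
Proof.
move=> ps; have [_ pos_s le_n] := is_perm_props ps.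
split=> [all_k k | sw]; last by apply/allP => k _; rewrite no_double_descentE; apply: sw.
have -> : restrict k s = restrict (minn k n) s.
  by apply: eq_in_filter => x /(allP le_n) /= xn; rewrite leq_min xn andbT.
have [-> | pos] := posnP (minn k n).
  by move: pos_s; rewrite -restrict_eq_nil => /eqP ->.
rewrite -no_double_descentE; apply: (allP all_k).
by rewrite mem_iota pos add1n ltnS geq_minr.
Qed.

Lemma map_succn_iota m n : map succn (iota m n) = iota m.+1 n.
Proof. by elim: n m => //= n IH m; rewrite IH. Qed.

Lemma rcons_iota m n : rcons (iota m n) (m + n) = iota m n.+1.
Proof. by rewrite -cats1 -addn1 iotaD. Qed.

Lemma RS_omega T s : RS T s -> AndII T (omega 1 s).
Proof.
case=> /and3P [ps /eqP last_s /(simsun_wordP ps) sw] shape_s.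
have [us pos_s le_n] := is_perm_props ps.
split; last by rewrite shape_omega.
- have := perm_omega 0 us; rewrite last_s => p1.
  have p2 : perm_eq (1 :: map succn s) (rcons (iota 1 (bsize T)) (bsize T).+1).
    rewrite -[(bsize T).+1]add1n rcons_iota /= perm_cons -map_succn_iota.
    exact: perm_map ps.
  rewrite /is_perm; move: (perm_trans p1 p2).
  by rewrite perm_rcons perm_sym perm_rcons perm_cons perm_sym.
- by apply: andre2_omega; rewrite ?last_s.
Qed.

Lemma AndII_omega_inv T t : AndII T t -> RS T (omega_inv (bsize T) t).
Proof.
case=> ps At shape_t; have [ut _ le_n] := is_perm_props ps.
have [t0 | nt] := eqVneq t [::].
  have n0 : bsize T = 0 by rewrite -(size_iota 1 (bsize T)) -(perm_size ps) t0.
  by rewrite t0 in shape_t *; split => //; rewrite /simsun n0.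
have ps' : is_perm (bsize T) (omega_inv (bsize T) t).
  have := perm_omega_inv (bsize T) ut; rewrite pop_label_nonnil // (minw_is_perm ps nt) => p1.
  rewrite /is_perm -(perm_cons 0); apply: perm_trans p1 _.
  apply: (@perm_trans _ (bsize T :: iota 0 (bsize T))).
    by rewrite perm_cons -[iota 0 _](mapK succnK) map_succn_iota; apply: perm_map.
  by rewrite -perm_rcons -[X in rcons _ X]add0n rcons_iota.
split; last by rewrite shape_omega_inv.
apply/and3P; split => //; first by rewrite last_omega_inv.
by apply/(simsun_wordP ps'); apply: simsun_word_omega_inv.
Qed.

Lemma omega_invK_RS T s : RS T s -> omega_inv (bsize T) (omega 1 s) = s.
Proof.
case=> /and3P [ps /eqP <- _] _; have [us pos_s _] := is_perm_props ps.
exact: omega_invK.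
Qed.

Lemma omegaK_AndII T t : AndII T t -> omega 1 (omega_inv (bsize T) t) = t.
Proof.
case=> ps At _; have [ut _ le_n] := is_perm_props ps.
have [-> // | nt] := eqVneq t [::].
by rewrite -{1}(minw_is_perm ps nt) omegaK.
Qed.

(* When T is not in URL both sets are empty. *)
Theorem theorem4p1 (n : nat) (T : btree) :
  1 <= n -> URL n T ->
  exists f : {s : seq nat | RS T s} -> {s : seq nat | AndII T s}, bijective f.
Proof.
move=> _ _.
exists (fun s => exist _ (omega 1 (sval s)) (RS_omega (svalP s))).
exists (fun t => exist _ (omega_inv (bsize T) (sval t)) (AndII_omega_inv (svalP t))).
  by case=> s RSs; apply: subset_eq_compat; exact: omega_invK_RS.
by case=> t At; apply: subset_eq_compat; exact: omegaK_AndII.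
Qed.
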